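(* Let $u$ be a coherent utility on $L^0$ with determining set $\mathcal{D}$, let $Y$ be a random variable or random vector, and let $X,W\in L^1_s(\mathcal{D})\cap L^1_s(\mathsf{E}(\mathcal{D}\mid Y))\cap L^1$. Then $$u^{fc}(X;Y;W)=u^c\big(\mathsf{E}(X\mid Y);\mathsf{E}(W\mid Y)\big).$$
   Context: Let $(\Omega,\mathcal{F},\mathsf{P})$ be a probability space, $L^0$ the space of all real random variables, $L^1=L^1(\mathsf{P})$, and $\mathcal{P}$ the set of probability measures on $\mathcal{F}$ absolutely continuous with respect to $\mathsf{P}$; measures are identified with their densities. For $\mathsf{Q}\in\mathcal{P}$, $\mathsf{E}_\mathsf{Q}X:=\mathsf{E}_\mathsf{Q}X^+-\mathsf{E}_\mathsf{Q}X^-$ with the convention $\infty-\infty=-\infty$. A coherent utility on $L^0$ is a map $u:L^0\to[-\infty,\infty]$ of the form $u(X)=\inf_{\mathsf{Q}\in\mathcal{D}}\mathsf{E}_\mathsf{Q}X$ for a nonempty $\mathcal{D}\subseteq\mathcal{P}$; its determining set is the largest such set, $\{\mathsf{Q}\in\mathcal{P}:\mathsf{E}_\mathsf{Q}X\ge u(X)\ \forall X\in L^0\}$. For $\mathcal{C}\subseteq\mathcal{P}$, $L^1_s(\mathcal{C})=\{X\in L^0:\lim_{n\to\infty}\sup_{\mathsf{Q}\in\mathcal{C}}\mathsf{E}_\mathsf{Q}|X|I(|X|>n)=0\}$. For a random vector $Y$, $\mathsf{E}(\mathcal{D}\mid Y):=\{\mathsf{E}(Z\mid Y):Z\in\mathcal{D}\}$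 and $u^f(X;Y):=\inf_{\mathsf{Q}\in\mathsf{E}(\mathcal{D}\mid Y)}\mathsf{E}_\mathsf{Q}X$. Extreme measures: $\mathcal{X}_\mathcal{D}(W)=\{\mathsf{Q}\in\mathcal{D}:\mathsf{E}_\mathsf{Q}W=u(W)\in(-\infty,\infty)\}$ and $\mathcal{X}_{\mathsf{E}(\mathcal{D}\mid Y)}(W)=\{\mathsf{Q}\in\mathsf{E}(\mathcal{D}\mid Y):\mathsf{E}_\mathsf{Q}W=u^f(W;Y)\in(-\infty,\infty)\}$. Utility contribution: $u^c(X;W)=\inf_{\mathsf{Q}\in\mathcal{X}_\mathcal{D}(W)}\mathsf{E}_\mathsf{Q}X$; factor utility contribution: $u^{fc}(X;Y;W)=\inf_{\mathsf{Q}\in\mathcal{X}_{\mathsf{E}(\mathcal{D}\mid Y)}(W)}\mathsf{E}_\mathsf{Q}X$. *)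

From HB Require Import structures.
From mathcomp Require Import all_boot all_order all_algebra.
From mathcomp Require Import all_classical all_reals all_analysis.
Set Implicit Arguments. Unset Strict Implicit. Unset Printing Implicit Defensive.
Import Order.TTheory GRing.Theory Num.Theory.
Local Open Scope classical_set_scope.
Local Open Scope ring_scope.

Section Defs.
Context {d : measure_display} {T : measurableType d} {R : realType}
  (P : probability T R).

Definition L0 : set (T -> R) := [set X | measurable_fun setT X].

(* The set \mathcal{P}: probability measures absolutely continuous w.r.t. P,
   identified with their densities dQ/dP. *)
Definition density (Z : T -> R) : Prop :=
  measurable_fun setT Z /\ (forall x, 0 <= Z x) /\
  (\int[P]_x (Z x)%:E = 1)%E.

(* E_Q X := E_Q X^+ - E_Q X^- ; ereal addition makes -oo absorbing, so
   +oo - +oo = -oo as required. *)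
Definition EQ (Q : T -> R) (X : T -> R) : \bar R :=
  ((\int[P]_x (Q x * Num.max (X x) 0)%:E)
   - (\int[P]_x (Q x * Num.max (- X x) 0)%:E))%E.

Definition inf_EQ (C : set (T -> R)) (X : T -> R) : \bar R :=
  ereal_inf [set EQ Q X | Q in C].

Definition coherent_utility (u : (T -> R) -> \bar R) : Prop :=
  exists D : set (T -> R), D !=set0 /\ D `<=` density /\
    forall X, L0 X -> u X = inf_EQ D X.

Definition determining_set (u : (T -> R) -> \bar R) : set (T -> R) :=
  [set Q | density Q /\ forall X, L0 X -> (u X <= EQ Q X)%E].

Definition L1s (C : set (T -> R)) : set (T -> R) :=
  [set X | L0 X /\
    (fun n : nat => ereal_sup
       [set EQ Q (fun w => if (n%:R < `|X w|) then `|X w| else 0) | Q in C])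
      @ \oo --> (0 : \bar R)].

Definition sigmaY n (Y : 'I_n -> T -> R) : set (set T) :=
  <<s [set Y i @^-1` B | i in [set: 'I_n] & B in [set B : set R | measurable B]] >>.

Definition is_cond_exp n (Y : 'I_n -> T -> R) (Z Zc : T -> R) : Prop :=
  (forall B : set R, measurable B -> sigmaY Y (Zc @^-1` B)) /\
  P.-integrable setT (fun x => (Zc x)%:E) /\
  forall A, sigmaY Y A ->
    (\int[P]_(x in A) (Zc x)%:E = \int[P]_(x in A) (Z x)%:E)%E.

Definition condE_set n (C : set (T -> R)) (Y : 'I_n -> T -> R) : set (T -> R) :=
  [set Q | density Q /\ exists2 Z, C Z & is_cond_exp Y Z Q].

Definition extreme (C : set (T -> R)) (v : \bar R) (W : T -> R) : set (T -> R) :=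
  [set Q | C Q /\ EQ Q W = v /\ v \is a fin_num].

Definition uf n (u : (T -> R) -> \bar R) (Y : 'I_n -> T -> R) (X : T -> R) :=
  inf_EQ (condE_set (determining_set u) Y) X.

Definition uc (u : (T -> R) -> \bar R) (X W : T -> R) : \bar R :=
  inf_EQ (extreme (determining_set u) (u W) W) X.

Definition ufc n (u : (T -> R) -> \bar R) (Y : 'I_n -> T -> R) (X W : T -> R) :=
  inf_EQ (extreme (condE_set (determining_set u) Y) (uf u Y W) W) X.

End Defs.

(* Every Q in E(D | Y) is a version of E(Z | Y) for some Z in D, and by
   Radon-Nikodym on sigma(Y) every Z in D has such a version, again a density.
   For such a pair E_Q X = E_Z E(X | Y): the sigma(Y)-measurable density Q
   cannot tell X from E(X | Y) (uniform integrability of X under E(D | Y) keeps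
   these Q-expectations finite), and the sigma(Y)-measurable E(X | Y) cannot
   tell Q from Z.  The same holds for W, so Q |-> Z matches E(D | Y) with D
   preserving the relevant expectations: u^f(W; Y) = u(E(W | Y)), the extreme
   measures correspond, and the two infima agree. *)

From HB Require Import structures.
From mathcomp Require Import all_boot all_order all_algebra.
From mathcomp Require Import all_classical all_reals all_analysis.
From mathcomp Require Import measurable_realfun lra.
Import Order.TTheory GRing.Theory Num.Theory.
Local Open Scope classical_set_scope.
Local Open Scope ring_scope.

Lemma sube_eq_adde {R : realDomainType} (a b c e : \bar R) :
  a \is a fin_num -> b \is a fin_num -> c \is a fin_num -> e \is a fin_num ->
  (a - b = c - e <-> a + e = b + c)%E.
Proof.
move: a b c e => [a| |] [b| |] [c| |] [e| |] // _ _ _ _.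
by split=> -[h]; congr (_%:E); lra.
Qed.

Lemma eq_integral_funrposneg d (T : measurableType d) (R : realType)
    (mu : {measure set T -> \bar R}) (A : set T) (f g : T -> R) :
  measurable A -> mu.-integrable A (EFin \o f) -> mu.-integrable A (EFin \o g) ->
  (\int[mu]_(x in A) (f x)%:E = \int[mu]_(x in A) (g x)%:E ->
   \int[mu]_(x in A) (f^\+ x + g^\- x)%:E = \int[mu]_(x in A) (f^\- x + g^\+ x)%:E)%E.
Proof.
move=> mA intf intg.
have [mf mg] := (measurable_int _ intf, measurable_int _ intg).
move/measurable_EFinP in mf; move/measurable_EFinP in mg.
rewrite integralE [X in _ = X -> _]integralE (funerpos f) (funerneg f).
rewrite (funerpos g) (funerneg g) => fg.
under eq_integral do rewrite EFinD.
under [RHS]eq_integral do rewrite EFinD.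
rewrite !ge0_integralD//; try by move=> x _; rewrite lee_fin.
- apply: (proj1 (sube_eq_adde _ _ _ _ _ _ _ _) fg);
    apply: integrable_fin_num => //.
  + exact: integrable_funrpos.
  + exact: integrable_funrneg.
  + exact: integrable_funrpos.
  + exact: integrable_funrneg.
all: apply/measurable_EFinP.
all: solve [exact: measurable_funrpos | exact: measurable_funrneg].
Qed.

Section sub_sigma_algebra.
Context {d : measure_display} {T : measurableType d} {R : realType}
  (P : probability T R) {G : set (set T)}.
Hypothesis sub_G : <<s G>> `<=` measurable.
Local Notation T' := (g_sigma_algebraType G).

Lemma measurable_fun_sub {f : T' -> R} :
  measurable_fun [set: T'] f -> measurable_fun [set: T] (f : T -> R).
Proof.
by move=> mf _ B mB; rewrite setTI; apply: sub_G; rewrite -[_ @^-1` _]setTI; exact: mf.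
Qed.

Definition same_integrals (f g : T -> R) := forall A, <<s G>> A ->
  (\int[P]_(x in A) (f x)%:E = \int[P]_(x in A) (g x)%:E)%E.

Import HBNNSimple.

Lemma ge0_integral_mul_nnsfun (f : T -> R) (s : {nnsfun T' >-> R}) :
  measurable_fun setT f -> (forall x, 0 <= f x) ->
  (\int[P]_x (f x * s x)%:E =
   \sum_(y \in range s) y%:E * \int[P]_(x in s @^-1` [set y]) (f x)%:E)%E.
Proof.
move=> mf f0.
have ms y : measurable (s @^-1` [set y] : set T).
  by apply: sub_G; exact: (measurable_funPTI s (measurable_set1 y)).
transitivity (\int[P]_x (\sum_(y \in range s) (f x * (y * \1_(s @^-1` [set y]) x))%:E))%E.
  apply: eq_integral => x _; rewrite fsumEFin// -fsbig_distrr//=.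
  by rewrite -(fimfunE s x).
rewrite ge0_integral_fsum//; last 2 first.
- move=> y; apply/measurable_EFinP; apply: measurable_funM => //.
  by apply: measurable_funM => //; exact: measurable_indic.
- by move=> y x _; rewrite lee_fin mulr_ge0//; exact: nnfun_muleindic_ge0.
apply: eq_fsbigr => y /[!inE] -[t _ <-].
transitivity (\int[P]_(x in s @^-1` [set s t]) ((s t)%:E * (f x)%:E))%E.
  rewrite [RHS]integral_mkcond; apply: eq_integral => x _.
  by rewrite /patch indicE; case: ifP => _; rewrite ?mulr1 ?mulr0// mulrC.
rewrite ge0_integralZl//.
- by apply/measurable_EFinP; exact: measurable_funTS.
- by move=> x _; rewrite lee_fin.
- by rewrite lee_fin.
Qed.

Lemma same_integrals_mul (f1 f2 h : T -> R) :
  measurable_fun setT f1 -> measurable_fun setT f2 ->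
  (forall x, 0 <= f1 x) -> (forall x, 0 <= f2 x) -> same_integrals f1 f2 ->
  measurable_fun [set: T'] (h : T' -> R) -> (forall x, 0 <= h x) ->
  (\int[P]_x (f1 x * h x)%:E = \int[P]_x (f2 x * h x)%:E)%E.
Proof.
move=> mf1 mf2 f10 f20 f12 mh h0.
have mh' : measurable_fun [set: T'] (EFin \o (h : T' -> R)) by exact/measurable_EFinP.
pose s := nnsfun_approx (measurableT : measurable [set: T']) mh'.
have integral_limn (f : T -> R) : measurable_fun setT f -> (forall x, 0 <= f x) ->
    (\int[P]_x (f x * h x)%:E = limn (fun n => \int[P]_x (f x * s n x)%:E))%E.
  move=> mf f0; rewrite -monotone_convergence//.
  - apply: eq_integral => x _; apply/esym/cvg_lim => //.
    under eq_fun do rewrite EFinM.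
    rewrite EFinM; apply: cvgeZl => //.
    exact: (@cvg_nnsfun_approx _ T' R setT measurableT _ mh' (fun x _ => h0 x) x I).
  - move=> n; apply/measurable_EFinP; apply: measurable_funM => //.
    exact/measurable_fun_sub/measurable_funPT.
  - by move=> n x _; rewrite lee_fin mulr_ge0.
  - move=> x _ a b ab; rewrite lee_fin ler_wpM2l//.
    by have /lefP := @nd_nnsfun_approx _ T' R setT measurableT _ mh' a b ab; apply.
rewrite !integral_limn//; congr (limn _); apply/funext => n.
rewrite !ge0_integral_mul_nnsfun//; apply: eq_fsbigr => y _; congr (_ * _)%E.
by apply: f12; exact: (measurable_funPTI (s n) (measurable_set1 y)).
Qed.

Lemma EQ_same_integralsl {Z Q V : T -> R} :
  measurable_fun setT Z -> (forall x, 0 <= Z x) ->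
  measurable_fun setT Q -> (forall x, 0 <= Q x) -> same_integrals Q Z ->
  measurable_fun [set: T'] (V : T' -> R) -> EQ P Z V = EQ P Q V.
Proof.
move=> mZ Z0 mQ Q0 QZ mV; rewrite /EQ.
congr (_ - _)%E; apply: same_integrals_mul => //.
all: by [move=> A /QZ-> | move=> x; exact: funrpos_ge0 | move=> x; exact: funrneg_ge0
  | exact: measurable_funrpos | exact: measurable_funrneg].
Qed.

Lemma same_integrals_funrposneg_mul {V Vc : T -> R} (h : T -> R) :
  P.-integrable setT (EFin \o V) -> P.-integrable setT (EFin \o Vc) ->
  measurable_fun [set: T'] (Vc : T' -> R) -> same_integrals V Vc ->
  measurable_fun [set: T'] (h : T' -> R) -> (forall x, 0 <= h x) ->
  (\int[P]_x ((V^\+ x + Vc^\- x) * h x)%:E =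
   \int[P]_x ((V^\- x + Vc^\+ x) * h x)%:E)%E.
Proof.
move=> iV iVc mVc VVc mh h0.
have mV : measurable_fun setT V by apply/measurable_EFinP; exact: measurable_int iV.
have mVcT := measurable_fun_sub mVc.
apply: same_integrals_mul => //.
- by apply: measurable_funD; [exact: measurable_funrpos|exact: measurable_funrneg].
- by apply: measurable_funD; [exact: measurable_funrneg|exact: measurable_funrpos].
- by move=> x; rewrite addr_ge0.
- by move=> x; rewrite addr_ge0.
move=> A GA; have mA := sub_G _ GA.
apply: eq_integral_funrposneg => //; last exact: VVc.
- exact: integrableS iV.
- exact: integrableS iVc.
Qed.

(* Conditional Jensen for the positive part, integrated against [Q]. *)
Lemma le_integral_mul_funrpos {Q V Vc : T -> R} :
  measurable_fun [set: T'] (Q : T' -> R) -> (forall x, 0 <= Q x) ->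
  measurable_fun setT V -> measurable_fun [set: T'] (Vc : T' -> R) ->
  (forall h : T -> R, measurable_fun [set: T'] (h : T' -> R) -> (forall x, 0 <= h x) ->
     (\int[P]_x ((V^\+ x + Vc^\- x) * h x)%:E =
      \int[P]_x ((V^\- x + Vc^\+ x) * h x)%:E)%E) ->
  (\int[P]_x (Q x * Vc^\+ x)%:E <= \int[P]_x (Q x * V^\+ x)%:E)%E.
Proof.
move=> mQ Q0 mV mVc swap.
(* On [Vc >= 0] the test function [h] sees [Vc^\+] and not [Vc^\-]. *)
pose h x := if 0 <= Vc x then Q x else 0.
have h0 x : 0 <= h x by rewrite /h; case: ifP.
have mh : measurable_fun [set: T'] (h : T' -> R).
  by apply: measurable_fun_ifT => //; exact: measurable_fun_ler.
have mQT := measurable_fun_sub mQ; have mhT := measurable_fun_sub mh.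
have mVcT := measurable_fun_sub mVc.
have mVp := measurable_funrpos mV; have mVn := measurable_funrneg mV.
have mVcp := measurable_funrpos mVcT; have mVcn := measurable_funrneg mVcT.
apply: (@le_trans _ _ (\int[P]_x ((V^\- x + Vc^\+ x) * h x)%:E)%E).
  apply: ge0_le_integral => //.
  - by move=> x _; rewrite lee_fin mulr_ge0.
  - by apply/measurable_EFinP; exact: measurable_funM.
  - by apply/measurable_EFinP; apply: measurable_funM => //; exact: measurable_funD.
  move=> x _; rewrite lee_fin /h /funrpos; case: ifP => Vc0.
    by rewrite max_l// mulrC ler_wpM2r// lerDr funrneg_ge0.
  by rewrite max_r ?mulr0 ?mulr_ge0 ?addr_ge0 ?funrneg_ge0// ltW// ltNge Vc0.
rewrite -swap//; apply: ge0_le_integral => //.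
- by move=> x _; rewrite lee_fin mulr_ge0// addr_ge0.
- by apply/measurable_EFinP; apply: measurable_funM => //; exact: measurable_funD.
- by apply/measurable_EFinP; exact: measurable_funM.
move=> x _; rewrite lee_fin /h /funrneg; case: ifP => Vc0.
  by rewrite max_r ?oppr_le0// addr0 mulrC.
by rewrite mulr0 mulr_ge0// funrpos_ge0.
Qed.

Lemma EQ_same_integralsr {Q V Vc : T -> R} :
  measurable_fun [set: T'] (Q : T' -> R) -> (forall x, 0 <= Q x) ->
  P.-integrable setT (EFin \o V) -> P.-integrable setT (EFin \o Vc) ->
  measurable_fun [set: T'] (Vc : T' -> R) -> same_integrals V Vc ->
  (\int[P]_x (Q x * V^\+ x)%:E < +oo)%E -> (\int[P]_x (Q x * V^\- x)%:E < +oo)%E ->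
  EQ P Q V = EQ P Q Vc.
Proof.
move=> mQ Q0 iV iVc mVc VVc Vp_fin Vn_fin.
have mV : measurable_fun setT V by apply/measurable_EFinP; exact: measurable_int iV.
have mVcT := measurable_fun_sub mVc.
have mQT := measurable_fun_sub mQ.
have swap h := same_integrals_funrposneg_mul h iV iVc mVc VVc.
have Vcp_le := le_integral_mul_funrpos mQ Q0 mV mVc swap.
(* The negative parts are the positive parts of [- V] and [- Vc]. *)
have Vcn_le : (\int[P]_x (Q x * Vc^\- x)%:E <= \int[P]_x (Q x * V^\- x)%:E)%E.
  rewrite -(funrposN Vc) -(funrposN V); apply: le_integral_mul_funrpos => //.
  - exact: measurable_funN.
  - exact: measurable_funN.
  by move=> h mh h0; rewrite !(funrposN, funrnegN); symmetry; exact: swap.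
have integralDl (f g : T -> R) : measurable_fun setT f -> measurable_fun setT g ->
    (forall x, 0 <= f x) -> (forall x, 0 <= g x) ->
    (\int[P]_x ((f x + g x) * Q x)%:E =
     \int[P]_x (Q x * f x)%:E + \int[P]_x (Q x * g x)%:E)%E.
  move=> mf mg f0 g0; rewrite -ge0_integralD//.
  - by apply: eq_integral => x _; rewrite mulrDl !(mulrC (Q x)).
  - by move=> x _; rewrite lee_fin mulr_ge0.
  - by apply/measurable_EFinP; exact: measurable_funM.
  - by move=> x _; rewrite lee_fin mulr_ge0.
  - by apply/measurable_EFinP; exact: measurable_funM.
have fin (f : T -> R) : (forall x, 0 <= f x) ->
    (\int[P]_x (Q x * f x)%:E < +oo)%E -> (\int[P]_x (Q x * f x)%:E)%E \is a fin_num.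
  by move=> f0 f_fin; rewrite ge0_fin_numE// integral_ge0// => x _; rewrite lee_fin mulr_ge0.
rewrite /EQ; apply/sube_eq_adde.
- exact: fin Vp_fin.
- exact: fin Vn_fin.
- exact: fin (le_lt_trans Vcp_le Vp_fin).
- exact: fin (le_lt_trans Vcn_le Vn_fin).
rewrite -!integralDl ?swap//.
all: by [exact: measurable_funrpos | exact: measurable_funrneg
  | move=> x; exact: funrpos_ge0 | move=> x; exact: funrneg_ge0].
Qed.

(* [distribution P to_sigma] is the restriction of [P] to [<<s G>>]. *)
Definition to_sigma : T -> T' := id.

Lemma measurable_to_sigma : measurable_fun [set: T] to_sigma.
Proof. by move=> _ B mB; rewrite setTI; exact: sub_G. Qed.

HB.instance Definition _ :=
  isMeasurableFun.Build _ _ T T' to_sigma measurable_to_sigma.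

Local Notation PG := (distribution P to_sigma).

Lemma ge0_integral_distribution_sigma (g : T' -> R) (A : set T') :
  measurable A -> measurable_fun [set: T'] g -> (forall x, 0 <= g x) ->
  (\int[PG]_(x in A) (g x)%:E = \int[P]_(x in A) (g x)%:E)%E.
Proof.
move=> mA mg g0; rewrite ge0_integral_pushforward//.
- by apply/measurable_EFinP; exact: measurable_funTS.
- by move=> x _; rewrite lee_fin.
Qed.

Section density_restriction.
Variable Z : T -> R.
Hypotheses (mZ : measurable_fun setT Z) (Z0 : forall x, 0 <= Z x)
  (iZ : P.-integrable setT (EFin \o Z)).

Let nuZ : set T' -> \bar R := fun A => (\int[P]_(x in A) (Z x)%:E)%E.

Let nuZ0 : nuZ set0 = 0%E. Proof. exact: integral_set0. Qed.

Let nuZ_ge0 A : (0 <= nuZ A)%E.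
Proof. by apply: integral_ge0 => x _; rewrite lee_fin. Qed.

Let nuZ_sigma_additive : semi_sigma_additive nuZ.
Proof.
move=> F mF tF mUF; apply: (@semi_sigma_additive_nng_induced _ T R P (EFin \o Z)) => //.
- exact/measurable_EFinP.
- by move=> n; apply: sub_G; exact: mF.
- exact: sub_G.
Qed.

HB.instance Definition _ := isMeasure.Build _ T' R nuZ nuZ0 nuZ_ge0 nuZ_sigma_additive.

Let nuZ_fin : fin_num_fun nuZ.
Proof.
move=> A mA; apply: integrable_fin_num; first exact: sub_G.
exact: integrableS (sub_G _ mA) _ iZ.
Qed.

HB.instance Definition _ := Measure_isFinite.Build _ T' R nuZ nuZ_fin.

Let nuZ_dominates : nuZ `<< PG.
Proof.
apply/null_content_dominatesP => A mA PA; apply: null_set_integral => //.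
- exact: sub_G.
- by apply/measurable_EFinP; exact: measurable_funTS.
Qed.

Lemma exists_cond_density : exists Q : T -> R,
  [/\ measurable_fun [set: T'] (Q : T' -> R), forall x, 0 <= Q x & same_integrals Q Z].
Proof.
pose q := Radon_Nikodym_SigmaFinite.f nuZ PG.
have q_fin x : q x \is a fin_num := Radon_Nikodym_SigmaFinite.f_fin_num nuZ_dominates x.
have mq : measurable_fun [set: T'] (fine \o q : T' -> R).
  apply/measurable_EFinP; apply: (eq_measurable_fun q) => [x _|]; first by rewrite /= fineK.
  exact/measurable_int/(Radon_Nikodym_SigmaFinite.f_integrable nuZ_dominates).
have q0 x : 0 <= fine (q x) by rewrite fine_ge0// Radon_Nikodym_SigmaFinite.f_ge0.
exists (fine \o q); split => // A GA; rewrite -ge0_integral_distribution_sigma//.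
transitivity (nuZ A); last by [].
rewrite (Radon_Nikodym_SigmaFinite.f_integral nuZ_dominates GA).
by apply: eq_integral => x _; rewrite /= fineK.
Qed.

End density_restriction.

End sub_sigma_algebra.

Section uniform_integrability.
Context {d : measure_display} {T : measurableType d} {R : realType}
  (P : probability T R).

Lemma ge0_EQE (Q X : T -> R) : (forall x, 0 <= X x) ->
  EQ P Q X = (\int[P]_x (Q x * X x)%:E)%E.
Proof.
move=> X0; rewrite /EQ.
under [X in (_ - X)%E]eq_integral do rewrite max_r ?oppr_le0// mulr0.
by rewrite integral0 sube0; apply: eq_integral => x _; rewrite max_l.
Qed.

Lemma density_integrable {Z : T -> R} :
  density P Z -> P.-integrable setT (EFin \o Z).
Proof.
move=> [mZ [Z0 Z1]]; apply/integrableP; split; first exact/measurable_EFinP.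
rewrite (eq_integral (fun x => (Z x)%:E)) ?Z1 ?ltry// => x _.
by rewrite /comp gee0_abs ?lee_fin.
Qed.

Lemma L1s_dominated_integral_lt {C : set (T -> R)} {V Q g : T -> R} :
  C `<=` density P -> L1s P C V -> C Q ->
  measurable_fun setT g -> (forall x, 0 <= g x <= `|V x|) ->
  (\int[P]_x (Q x * g x)%:E < +oo)%E.
Proof.
move=> CD [mV /cvg_is_fine [N _ /(_ N (leqnn N)) sup_fin]] CQ mg g_le.
have [mQ [Q0 Q1]] := CD Q CQ.
pose t x := if N%:R < `|V x| then `|V x| else 0.
have t0 x : 0 <= t x by rewrite /t; case: ifP.
have mt : measurable_fun setT t.
  apply: measurable_fun_ifT; last exact: measurable_cst.
  - by apply: measurable_fun_ltr => //; exact: measurableT_comp.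
  - exact: measurableT_comp.
have sup_lt : (ereal_sup [set EQ P Q' t | Q' in C] < +oo)%E by rewrite ltey_eq sup_fin.
have Qt_fin : (\int[P]_x (Q x * t x)%:E < +oo)%E.
  rewrite -ge0_EQE//; apply: le_lt_trans sup_lt; apply: ereal_sup_ubound.
  by exists Q.
apply: le_lt_trans (_ : \int[P]_x ((N%:R * Q x)%:E + (Q x * t x)%:E) < +oo)%E.
  apply: ge0_le_integral => //.
  - by move=> x _; rewrite lee_fin mulr_ge0//; case/andP: (g_le x).
  - by apply/measurable_EFinP; exact: measurable_funM.
  - by apply: emeasurable_funD; apply/measurable_EFinP; exact: measurable_funM.
  move=> x _; rewrite -EFinD lee_fin [_ * Q x]mulrC -mulrDr ler_wpM2l//.
  have /andP[_ gV] := g_le x; apply: le_trans gV _; rewrite /t.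
  by case: ltP => [_|VN]; rewrite ?lerDr// addr0.
rewrite ge0_integralD//; last 4 first.
- by move=> x _; rewrite lee_fin mulr_ge0.
- by apply/measurable_EFinP; exact: measurable_funM.
- by move=> x _; rewrite lee_fin mulr_ge0.
- by apply/measurable_EFinP; exact: measurable_funM.
under eq_integral do rewrite EFinM.
rewrite ge0_integralZl//; last 2 first.
- exact/measurable_EFinP.
- by move=> x _; rewrite lee_fin.
by rewrite Q1 mule1 lte_add_pinfty ?ltry.
Qed.

End uniform_integrability.

Lemma coherent_utility_determining_set {d : measure_display} {T : measurableType d}
    {R : realType} (P : probability T R) (u : (T -> R) -> \bar R) :
  coherent_utility P u -> forall X, L0 X -> u X = inf_EQ P (determining_set P u) X.
Proof.
move=> [D [_ [DD uD]]] X L0X; apply/eqP; rewrite eq_le; apply/andP; split.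
  by apply/ereal_infP => _ [Q [_ uQ] <-]; exact: uQ.
rewrite [leRHS]uD//; apply/ereal_infP => _ [Q DQ <-]; apply: ereal_inf_lbound.
exists Q => //; split; first exact: DD.
by move=> V L0V; rewrite uD//; apply: ereal_inf_lbound; exists Q.
Qed.

Section conditioning_on_Y.
Context {d : measure_display} {T : measurableType d} {R : realType}
  (P : probability T R) {n : nat} (Y : 'I_n -> T -> R).
Hypothesis mY : forall i, measurable_fun setT (Y i).

Definition sigmaY_gen : set (set T) :=
  [set Y i @^-1` B | i in [set: 'I_n] & B in [set B : set R | measurable B]].

Let sub_sigmaY : <<s sigmaY_gen>> `<=` measurable.
Proof.
apply: smallest_sub; first exact: sigma_algebra_measurable.
by move=> _ [i _ [B mB <-]]; rewrite -[_ @^-1` _]setTI; exact: mY.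
Qed.

Local Notation TY := (g_sigma_algebraType sigmaY_gen).

Lemma is_cond_exp_measurable {Z Zc : T -> R} :
  is_cond_exp P Y Z Zc -> measurable_fun [set: TY] (Zc : TY -> R).
Proof. by move=> [mZc _] _ B mB; rewrite setTI; exact: mZc. Qed.

Lemma L0_cond_exp {Z Zc : T -> R} : is_cond_exp P Y Z Zc -> L0 Zc.
Proof. by move=> cZ; exact: (measurable_fun_sub sub_sigmaY (is_cond_exp_measurable cZ)). Qed.

Lemma exists_is_cond_exp {Z : T -> R} :
  density P Z -> exists2 Q, density P Q & is_cond_exp P Y Z Q.
Proof.
move=> dZ; have [mZ [Z0 Z1]] := dZ.
have [Q [mQ Q0 QZ]] := exists_cond_density P sub_sigmaY _ mZ Z0 (density_integrable P dZ).
have dQ : density P Q.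
  split; first exact: measurable_fun_sub mQ.
  by split=> //; rewrite QZ ?Z1//; exact: (@measurableT _ TY).
exists Q => //; split; last split => //.
- by move=> B mB; rewrite -[_ @^-1` _]setTI; exact: mQ.
- exact: (density_integrable P dQ).
Qed.

Lemma EQ_is_cond_exp {C : set (T -> R)} {V Vc Q Z : T -> R} :
  C `<=` density P -> L1s P C V -> P.-integrable setT (EFin \o V) ->
  is_cond_exp P Y V Vc -> C Q -> density P Z -> is_cond_exp P Y Z Q ->
  EQ P Q V = EQ P Z Vc.
Proof.
move=> CD CV iV cV CQ [mZ [Z0 _]] cQ.
have [mQ [Q0 _]] := CD Q CQ.
have [_ [iVc VcV]] := cV; have [_ [_ QZ]] := cQ.
have mVc := is_cond_exp_measurable cV; have mV := CV.1.
rewrite (EQ_same_integralsr P sub_sigmaY (is_cond_exp_measurable cQ) Q0 iV iVc mVc).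
- by rewrite (EQ_same_integralsl P sub_sigmaY mZ Z0 mQ Q0 QZ mVc).
- by move=> A GA; rewrite VcV.
- apply: (L1s_dominated_integral_lt P CD CV CQ); first exact: measurable_funrpos mV.
  by move=> x; rewrite funrpos_ge0 ge_max normr_ge0 ler_norm.
- apply: (L1s_dominated_integral_lt P CD CV CQ); first exact: measurable_funrneg mV.
  by move=> x; rewrite funrneg_ge0 ge_max normr_ge0 -normrN ler_norm.
Qed.

Lemma inf_EQ_condE_set {D : set (T -> R)} (S : set (\bar R)) {X W Xc Wc : T -> R} :
  D `<=` density P ->
  L1s P (condE_set P D Y) X -> P.-integrable setT (EFin \o X) -> is_cond_exp P Y X Xc ->
  L1s P (condE_set P D Y) W -> P.-integrable setT (EFin \o W) -> is_cond_exp P Y W Wc ->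
  inf_EQ P (condE_set P D Y `&` (EQ P ^~ W) @^-1` S) X =
  inf_EQ P (D `&` (EQ P ^~ Wc) @^-1` S) Xc.
Proof.
move=> DD CX iX cX CW iW cW.
have CD : condE_set P D Y `<=` density P by move=> Q [].
rewrite /inf_EQ; congr ereal_inf; apply/seteqP; split=> _ [Q [CQ SQ] <-].
- have [_ [Z DZ cZ]] := CQ; have dZ := DD Z DZ.
  exists Z; last by rewrite (EQ_is_cond_exp CD CX iX cX CQ dZ cZ).
  by split=> //=; rewrite -(EQ_is_cond_exp CD CW iW cW CQ dZ cZ).
- have [Q' dQ' cQ'] := exists_is_cond_exp (DD Q CQ).
  have CQ' : condE_set P D Y Q' by split=> //; exists Q.
  exists Q'; last by rewrite (EQ_is_cond_exp CD CX iX cX CQ' (DD Q CQ) cQ').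
  by split=> //=; rewrite (EQ_is_cond_exp CD CW iW cW CQ' (DD Q CQ) cQ').
Qed.

End conditioning_on_Y.

Theorem theorem6p3 (d : measure_display) (T : measurableType d) (R : realType)
  (P : probability T R) (u : (T -> R) -> \bar R) (n : nat)
  (Y : 'I_n.+1 -> T -> R) (X W Xc Wc : T -> R) :
  coherent_utility P u ->
  (forall i, measurable_fun setT (Y i)) ->
  L1s P (determining_set P u) X ->
  L1s P (condE_set P (determining_set P u) Y) X ->
  P.-integrable setT (fun x => (X x)%:E) ->
  L1s P (determining_set P u) W ->
  L1s P (condE_set P (determining_set P u) Y) W ->
  P.-integrable setT (fun x => (W x)%:E) ->
  is_cond_exp P Y X Xc -> is_cond_exp P Y W Wc ->
  ufc P u Y X W = uc P u Xc Wc.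
Proof.
move=> cu mY _ CX iX _ CW iW cX cW.
have DD : determining_set P u `<=` density P by move=> Q [].
have ufW : uf P u Y W = u Wc.
  rewrite (coherent_utility_determining_set P u cu _ (L0_cond_exp P Y mY cW)).
  have := inf_EQ_condE_set P Y mY setT DD CW iW cW CW iW cW.
  by rewrite !preimage_setT !setIT.
rewrite /ufc /uc ufW.
exact: (inf_EQ_condE_set P Y mY [set e | e = u Wc /\ u Wc \is a fin_num]
  DD CX iX cX CW iW cW).
Qed.
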